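(* There is an absolute constant $c>0$ such that for all $\varepsilon,\delta\in(0,1)$ the following holds: any sublinear algorithm which, for every finite input multiset $A\subset\mathbb{R}^d$, outputs a $(1+\varepsilon)$-approximate mean of $A$ with probability at least $1-\delta$ must sample at least $c\,\varepsilon^{-1}\log\delta^{-1}$ points.
   Context: For a finite multiset $A\subset\mathbb{R}^d$ with $|A|=n$, let $\mathrm{Opt}=\min_{x\in\mathbb{R}^d}\sum_{p\in A}\|p-x\|^2$. A point $x$ is a $(1+\varepsilon)$-approximate mean of $A$ if $\sum_{p\in A}\|p-x\|^2\le(1+\varepsilon)\mathrm{Opt}$. A sublinear algorithm accesses the input $A$ only by drawing points independently and uniformly at random from $A$ (it may use internal randomness); its output depends only on the sampled points and its internal randomness. *)

From HB Require Import structures.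
From mathcomp Require Import all_boot all_order all_algebra.
From mathcomp Require Import all_classical all_reals all_analysis.
Set Implicit Arguments. Unset Strict Implicit. Unset Printing Implicit Defensive.
Import Order.TTheory GRing.Theory Num.Theory.
Local Open Scope ring_scope.
Local Open Scope classical_set_scope.

Section Defs.
Variable R : realType.

Definition sqnorm (d : nat) (x : 'rV[R]_d) : R := \sum_(i < d) (x ord0 i) ^+ 2.

(* A finite multiset of n points of R^d is a function 'I_n -> R^d. *)
Definition cost (d n : nat) (A : 'I_n -> 'rV[R]_d) (x : 'rV[R]_d) : R :=
  \sum_(j < n) sqnorm (A j - x).

Definition Opt (d n : nat) (A : 'I_n -> 'rV[R]_d) : R := inf (range (cost A)).

Definition approx_mean (eps : R) (d n : nat) (A : 'I_n -> 'rV[R]_d) (x : 'rV[R]_d) : Prop :=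
  cost A x <= (1 + eps) * Opt A.

(* A sublinear algorithm drawing m samples, with internal randomness omega
   from a probability space (Omega, P): its output depends only on omega and
   the sequence of m sampled points. *)
Definition success_event (m d n : nat) (Omega : Type)
  (alg : Omega -> ('I_m -> 'rV[R]_d) -> 'rV[R]_d) (eps : R)
  (A : 'I_n -> 'rV[R]_d) (s : {ffun 'I_m -> 'I_n}) : set Omega :=
  [set w | approx_mean eps A (alg w (fun k => A (s k)))].

(* Success probability when the m samples are i.i.d. uniform indices of A
   (independent of the internal randomness). *)
Definition success_prob (m d n : nat) (dO : measure_display) (Omega : measurableType dO)
  (P : probability Omega R) (alg : Omega -> ('I_m -> 'rV[R]_d) -> 'rV[R]_d) (eps : R)
  (A : 'I_n -> 'rV[R]_d) : R :=
  (n%:R ^+ m)^-1 * \sum_(s : {ffun 'I_m -> 'I_n}) fine (P (success_event alg eps A s)).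

End Defs.

(** Take [b] points at the origin and [k ~ eps b] points at [t e_1].  With
    probability [(b/(k+b))^m] every sample is the origin, and then the output
    of the algorithm does not depend on [t].  But a [(1+eps)]-approximate mean
    must have first coordinate in [[mu/2, 3 mu/2]], where [mu = k t/(k+b)] is
    that of the true mean, so for [t = 1, 4, 16, ...] the events "the output on the
    all-zero sample is good for [t]" are pairwise disjoint.  If each had
    probability bounded away from [0] they could not fit in a probability
    space; hence [(b/(k+b))^m <= delta], i.e. [m >= ln(1/delta) / ln(1+k/b)],
    which is of order [eps^-1 ln(1/delta)]. *)
From mathcomp Require Import all_boot all_order all_algebra.
From mathcomp Require Import all_classical all_reals all_analysis.
From mathcomp Require Import ring lra.
Import Order.TTheory GRing.Theory Num.Theory.
Local Open Scope ring_scope.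
Local Open Scope classical_set_scope.
Set Implicit Arguments. Unset Strict Implicit.

Section Cost.
Variables (R : realType) (d : nat).

Lemma Opt_le_cost n (A : 'I_n -> 'rV[R]_d) x : Opt A <= cost A x.
Proof.
apply: ge_inf; last by exists x.
exists 0 => _ [y _ <-]; apply: sumr_ge0 => j _.
by apply: sumr_ge0 => i _; exact: sqr_ge0.
Qed.

Lemma sqr_coord_le_sqnorm (i0 : 'I_d) (v : 'rV[R]_d) : v ord0 i0 ^+ 2 <= sqnorm v.
Proof. by rewrite /sqnorm (bigD1 i0) //= lerDl sumr_ge0 // => i _; exact: sqr_ge0. Qed.

Lemma sqnorm_scale_delta_mx (i0 : 'I_d) (c : R) : sqnorm (c *: delta_mx ord0 i0) = c ^+ 2.
Proof.
rewrite /sqnorm (bigD1 i0) //= big1 => [|i /negPf i_neq]; rewrite !mxE !eqxx ?i_neq /=.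
  by rewrite mulr1 addr0.
by rewrite mulr0 expr0n.
Qed.

End Cost.

Section ClusterInstance.
Variables (R : realType) (d : nat) (i0 : 'I_d) (k b : nat).

Definition cluster_instance (t : R) : 'I_(k + b) -> 'rV[R]_d :=
  fun j => (if (j < k)%N then t else 0) *: delta_mx ord0 i0.

Lemma sum_cluster_sqr (t y : R) :
  \sum_(j < k + b) ((if (j < k)%N then t else 0) - y) ^+ 2 =
  k%:R * (t - y) ^+ 2 + b%:R * y ^+ 2.
Proof.
rewrite big_split_ord /= (eq_bigr (fun _ => (t - y) ^+ 2)) => [|i _]; last by rewrite ltn_ord.
rewrite [X in _ + X](eq_bigr (fun _ => y ^+ 2)) => [|i _].
  by rewrite !sumr_const !card_ord !mulr_natl.
by rewrite ltnNge leq_addr sub0r sqrrN.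
Qed.

Lemma cost_cluster_ge (t : R) (x : 'rV[R]_d) :
  k%:R * (t - x ord0 i0) ^+ 2 + b%:R * x ord0 i0 ^+ 2 <= cost (cluster_instance t) x.
Proof.
rewrite -sum_cluster_sqr; apply: ler_sum => j _.
by apply: le_trans (sqr_coord_le_sqnorm i0 _); rewrite !mxE !eqxx /= mulr1.
Qed.

Lemma cost_cluster_scale_delta_mx (t mu : R) :
  cost (cluster_instance t) (mu *: delta_mx ord0 i0) = k%:R * (t - mu) ^+ 2 + b%:R * mu ^+ 2.
Proof.
by rewrite -sum_cluster_sqr; apply: eq_bigr => j _; rewrite -scalerBl sqnorm_scale_delta_mx.
Qed.

Lemma approx_mean_cluster_coord (eps t : R) (x : 'rV[R]_d) :
  0 <= eps -> (0 < k)%N -> 4 * eps * b%:R <= k%:R -> 0 <= t ->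
  approx_mean eps (cluster_instance t) x ->
  `|(k + b)%:R * x ord0 i0 - k%:R * t| <= k%:R * t / 2.
Proof.
move=> eps_ge0 k_gt0 eps_b_le_k t_ge0 good_x.
have k_gt0R : 0 < k%:R :> R by rewrite ltr0n.
have kt_ge0 : 0 <= k%:R * t / 2 by rewrite divr_ge0 // mulr_ge0 // ltW.
rewrite -ler_sqr ?nnegrE // real_normK ?num_real //.
rewrite natrD; set y := x ord0 i0.
have s_gt0 : 0 < k%:R + b%:R :> R by rewrite ltr_wpDr.
set mu := k%:R * t / (k%:R + b%:R).
have s_mu : (k%:R + b%:R) * mu = k%:R * t by rewrite mulrCA divff ?mulr1 // gt_eqF.
have cost_mu : (k%:R + b%:R) * (k%:R * (t - mu) ^+ 2 + b%:R * mu ^+ 2) =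
    k%:R * b%:R * t ^+ 2 :> R by nra.
have cost_y : (k%:R + b%:R) * (k%:R * (t - y) ^+ 2 + b%:R * y ^+ 2) =
    ((k%:R + b%:R) * y - k%:R * t) ^+ 2 + k%:R * b%:R * t ^+ 2 :> R by ring.
have near_opt : k%:R * (t - y) ^+ 2 + b%:R * y ^+ 2 <=
    (1 + eps) * (k%:R * (t - mu) ^+ 2 + b%:R * mu ^+ 2).
  apply: le_trans (cost_cluster_ge t x) _; apply: le_trans good_x _.
  by rewrite -cost_cluster_scale_delta_mx ler_wpM2l ?Opt_le_cost //; lra.
have dev_le : ((k%:R + b%:R) * y - k%:R * t) ^+ 2 + k%:R * b%:R * t ^+ 2 <=
    (1 + eps) * (k%:R * b%:R * t ^+ 2).
  by rewrite -cost_y -cost_mu [leRHS]mulrCA ler_wpM2l // ltW.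
have kt2_ge0 : 0 <= k%:R * t ^+ 2 :> R by rewrite mulr_ge0 ?sqr_ge0 ?ltW.
have slack : 0 <= k%:R - 4 * eps * b%:R by rewrite subr_ge0.
have := mulr_ge0 slack kt2_ge0.
lra.
Qed.

Lemma approx_mean_cluster_disjoint (eps t t' : R) (x : 'rV[R]_d) :
  0 <= eps -> (0 < k)%N -> 4 * eps * b%:R <= k%:R -> 0 < t -> 4 * t <= t' ->
  approx_mean eps (cluster_instance t) x -> ~ approx_mean eps (cluster_instance t') x.
Proof.
move=> eps_ge0 k_gt0 eps_b_le_k t_gt0 t_le_t' good_t good_t'.
have := approx_mean_cluster_coord eps_ge0 k_gt0 eps_b_le_k (ltW t_gt0) good_t.
have := approx_mean_cluster_coord eps_ge0 k_gt0 eps_b_le_k _ good_t'.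
rewrite !ler_norml => /(_ ltac:(lra)) /andP[near_t' _] /andP[_ near_t].
have : k%:R * (4 * t) <= k%:R * t' :> R by rewrite ler_pM2l ?ltr0n.
have : 0 < k%:R * t :> R by rewrite mulr_gt0 ?ltr0n.
lra.
Qed.

End ClusterInstance.

Arguments cluster_instance {R d} i0 k b t _.

Section DisjointEvents.
Variables (R : realType) (dO : measure_display) (Omega : measurableType dO).
Variable P : probability Omega R.

Lemma fine_probability_le1 (X : set Omega) : measurable X -> fine (P X) <= 1.
Proof. by move=> mX; rewrite -lee_fin fineK ?fin_num_measure ?probability_le1. Qed.

Lemma disjoint_events_prob_lb_le0 (F : nat -> set Omega) (g : R) :
  (forall j, measurable (F j)) -> trivIset setT F ->
  (forall j, g <= fine (P (F j))) -> g <= 0.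
Proof.
move=> mF tF g_le.
have sum_le1 K : K%:R * g <= 1.
  have mU : measurable (\big[setU/set0]_(j < K) F j) by exact: bigsetU_measurable.
  have := probability_le1 P mU; rewrite measure_bigsetU //.
  have -> : (\sum_(j < K) P (F j) = (\sum_(j < K) fine (P (F j)))%:E)%E.
    by rewrite -sumEFin; apply: eq_bigr => j _; rewrite fineK ?fin_num_measure.
  rewrite lee_fin; apply: le_trans.
  rewrite -[K in K%:R]card_ord mulr_natl -sumr_const.
  by apply: ler_sum => j _.
rewrite leNgt; apply/negP => g_gt0.
have : 1 < (Num.truncn g^-1).+1%:R * g.
  by rewrite -[X in X < _](mulVf (lt0r_neq0 g_gt0)) ltr_pM2r // truncnS_gt.
by rewrite ltNge sum_le1.
Qed.

End DisjointEvents.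

Section Sampling.
Variables (R : realType) (m d : nat) (dO : measure_display) (Omega : measurableType dO).
Variables (P : probability Omega R) (alg : Omega -> ('I_m -> 'rV[R]_d) -> 'rV[R]_d).
Variables (eps delta : R).

Lemma success_prob_failure_on_samples n (A : 'I_n -> 'rV[R]_d)
    (S : {set {ffun 'I_m -> 'I_n}}) (F : set Omega) :
  (0 < n)%N -> (forall s, measurable (success_event alg eps A s)) ->
  1 - delta <= success_prob P alg eps A ->
  (forall s, s \in S -> success_event alg eps A s = F) ->
  (1 - fine (P F)) * #|S|%:R <= delta * n%:R ^+ m.
Proof.
move=> n_gt0 m_succ succ_ge succ_S.
set f := fun s => fine (P (success_event alg eps A s)).
have f_le1 s : f s <= 1 := fine_probability_le1 P (m_succ s).
have fail_le : \sum_s (1 - f s) <= delta * n%:R ^+ m.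
  rewrite sumrB sumr_const card_ffun !card_ord -natrX.
  move: succ_ge; rewrite /success_prob -natrX ler_pdivlMl ?ltr0n ?expn_gt0 ?n_gt0 //.
  lra.
apply: le_trans fail_le; rewrite mulr_natr -sumr_const big_mkcond /=.
apply: ler_sum => s _; case: ifP => [/succ_S <- //|_].
by rewrite subr_ge0.
Qed.

Definition zero_block_samples (k b : nat) : {set {ffun 'I_m -> 'I_(k + b)}} :=
  [set [ffun i => rshift k (g i)] | g : {ffun 'I_m -> 'I_b}].

Lemma card_zero_block_samples k b : #|zero_block_samples k b| = (b ^ m)%N.
Proof.
rewrite card_imset ?cardsT ?card_ffun ?card_ord // => g1 g2 /ffunP g12.
by apply/ffunP => i; have := g12 i; rewrite !ffunE => /rshift_inj.
Qed.

Lemma success_event_zero_block (i0 : 'I_d) k b (t : R) s :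
  s \in zero_block_samples k b ->
  success_event alg eps (cluster_instance i0 k b t) s =
  [set w | approx_mean eps (cluster_instance i0 k b t) (alg w (fun _ => 0))].
Proof.
case/imsetP => g _ ->; rewrite /success_event.
congr [set w | approx_mean _ _ (alg w _)]; apply/funext => w; apply/funext => i.
by rewrite /cluster_instance ffunE /= ltnNge leq_addr scale0r.
Qed.

Lemma zero_block_prob_le (i0 : 'I_d) k b :
  0 <= eps -> (0 < k)%N -> (0 < b)%N -> 4 * eps * b%:R <= k%:R ->
  (forall A : 'I_(k + b) -> 'rV[R]_d,
     (forall s, measurable (success_event alg eps A s)) /\
     1 - delta <= success_prob P alg eps A) ->
  (b%:R / (k + b)%:R) ^+ m <= delta.
Proof.
move=> eps_ge0 k_gt0 b_gt0 eps_b_le_k good_alg.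
pose F j := [set w | approx_mean eps (cluster_instance i0 k b (4 ^ j)%:R) (alg w (fun _ => 0))].
have s0_in : [ffun=> rshift k (Ordinal b_gt0)] \in zero_block_samples k b.
  by apply/imsetP; exists [ffun=> Ordinal b_gt0] => //; apply/ffunP => i; rewrite !ffunE.
have F_meas j : measurable (F j).
  by rewrite /F -(success_event_zero_block _ _ s0_in); exact: (good_alg _).1.
have F_fail j : (1 - fine (P (F j))) * (b ^ m)%:R <= delta * (k + b)%:R ^+ m.
  have [m_succ succ_ge] := good_alg (cluster_instance i0 k b (4 ^ j)%:R).
  rewrite -(card_zero_block_samples k); apply: success_prob_failure_on_samples => //.
    by rewrite addn_gt0 k_gt0.
  by move=> s; exact: success_event_zero_block.
have F_lt_disj i j : (i < j)%N -> forall w, F i w -> ~ F j w.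
  move=> ij w; apply: approx_mean_cluster_disjoint => //.
  by rewrite -natrM ler_nat -expnS leq_pexp2l.
have F_disj : trivIset setT F.
  move=> i j _ _ [w [Fi Fj]]; case: (ltngtP i j) => // [ij|ji].
    by case: (F_lt_disj _ _ ij w Fi Fj).
  by case: (F_lt_disj _ _ ji w Fj Fi).
have B_gt0 : 0 < (b ^ m)%:R :> R by rewrite ltr0n expn_gt0 b_gt0.
have := disjoint_events_prob_lb_le0 (P := P) F_meas F_disj
  (g := 1 - delta * (k + b)%:R ^+ m / (b ^ m)%:R).
rewrite subr_le0 ler_pdivlMr // mul1r expr_div_n natrX => B_le.
rewrite ler_pdivrMr ?exprn_gt0 ?ltr0n ?addn_gt0 ?k_gt0 //; apply: B_le => j.
by have := F_fail j; rewrite -ler_pdivlMr // natrX; lra.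
Qed.

End Sampling.

Lemma ln_invf_le_of_exprV_le (R : realType) (x delta : R) m :
  0 <= x -> 0 < delta -> ((1 + x) ^+ m)^-1 <= delta -> ln delta^-1 <= m%:R * x.
Proof.
move=> x_ge0 delta_gt0 pow_le.
have pow_gt0 : 0 < (1 + x) ^+ m by rewrite exprn_gt0 // ltr_wpDr.
rewrite -ler_expR lnK ?posrE ?invr_gt0 // expRM_natl.
apply: le_trans (lerXn2r _ _ _ (expR_ge1Dx x)); rewrite ?nnegrE ?addr_ge0 ?expR_ge0 //.
by rewrite -[leRHS]invrK lef_pV2 ?posrE ?invr_gt0.
Qed.

Lemma exists_cluster_sizes (R : realType) (eps : R) : 0 < eps -> eps < 1 ->
  exists k b : nat, [/\ (0 < k)%N, (0 < b)%N &
    4 * eps * b%:R <= k%:R <= 16 * eps * b%:R].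
Proof.
move=> eps_gt0 eps_lt1; have [quarter_le|eps_lt] := lerP (1 / 4) eps.
  by exists 4%N, 1%N; split => //; apply/andP; split; lra.
set x := (4 * eps)^-1.
have x_ge1 : 1 <= x by rewrite /x invf_ge1; lra.
have /andP[b_le b_gt] := truncn_itv (le_trans ler01 x_ge1).
have b_ge1 : 1 <= (Num.truncn x)%:R :> R by rewrite ler1n truncn_gt0.
have eps_x : 4 * eps * x = 1 by rewrite mulfV // gt_eqF //; lra.
exists 1%N, (Num.truncn x); split; rewrite ?truncn_gt0 //.
rewrite -natr1 in b_gt; apply/andP; split; nra.
Qed.

Theorem theorem5p1 (R : realType) :
  exists c : R, 0 < c /\
  forall (eps delta : R), 0 < eps < 1 -> 0 < delta < 1 ->
  forall (d : nat), (0 < d)%N ->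
  forall (m : nat) (dO : measure_display) (Omega : measurableType dO)
         (P : probability Omega R)
         (alg : Omega -> ('I_m -> 'rV[R]_d) -> 'rV[R]_d),
    (forall (n : nat) (A : 'I_n -> 'rV[R]_d), (0 < n)%N ->
       (forall s : {ffun 'I_m -> 'I_n}, measurable (success_event alg eps A s)) /\
       1 - delta <= success_prob P alg eps A) ->
    c * eps^-1 * ln (delta^-1) <= m%:R.
Proof.
exists (1 / 16); split=> [|eps delta /andP[eps_gt0 eps_lt1] /andP[delta_gt0 _]]; first lra.
move=> d d_gt0 m dO Omega P alg good_alg.
have [k [b [k_gt0 b_gt0 /andP[eps_b_le_k k_le_eps_b]]]] := exists_cluster_sizes eps_gt0 eps_lt1.
have kb_gt0 : (0 < k + b)%N by rewrite addn_gt0 k_gt0.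
have zero_block_le := zero_block_prob_le (P := P) (alg := alg) (Ordinal d_gt0)
  (ltW eps_gt0) k_gt0 b_gt0 eps_b_le_k (good_alg _^~ kb_gt0).
have b_gt0R : 0 < b%:R :> R by rewrite ltr0n.
have ln_le : ln delta^-1 <= m%:R * (k%:R / b%:R).
  apply: ln_invf_le_of_exprV_le => //.
  by rewrite -exprVn -[X in X + _](divff (lt0r_neq0 b_gt0R)) -mulrDl -natrD addnC invf_div.
have ratio_le : k%:R / b%:R <= 16 * eps by rewrite ler_pdivrMr.
have ln_le16 : ln delta^-1 <= m%:R * (16 * eps) by apply: le_trans ln_le (ler_wpM2l _ ratio_le).
have c_ge0 : 0 <= 1 / 16 * eps^-1 by rewrite mulr_ge0 // invr_ge0 ltW.
apply: le_trans (ler_wpM2l c_ge0 ln_le16) _.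
by rewrite [leLHS](_ : _ = m%:R :> R) //; field; rewrite gt_eqF.
Qed.
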